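(* Let $\mathfrak{A}$ be a $(k,p,q)$-differential subalgebra of the $C^*$-algebra $\mathfrak{B}$. Then for every $a=a^*\in\mathfrak{A}$ and every $\tau>\log_k(\max\{k-1,p\})$ one has $$\|u(ta)\|_{\mathfrak{A}}=O(e^{|t|^\tau})\quad\text{as } |t|\to\infty,\ t\in\mathbb{R}.$$
   Context: Let $\mathfrak{B}$ be a $C^*$-algebra with norm $\|\cdot\|_{\mathfrak{B}}$. A $(k,p,q)$-differential subalgebra of $\mathfrak{B}$ is a $*$-subalgebra $\mathfrak{A}\subseteq\mathfrak{B}$ equipped with its own norm $\|\cdot\|_{\mathfrak{A}}$ making it a Banach $*$-algebra on which the involution is continuous, where $k\in\mathbb{Z}$, $k\geq 2$, and $p,q>0$ are reals with $p+q=k$, such that for some constant $C>0$, $\|a^k\|_{\mathfrak{A}}\leq C\|a\|_{\mathfrak{A}}^p\|a\|_{\mathfrak{B}}^q$ for all $a\in\mathfrak{A}$. For $b\in\mathfrak{A}$, $u(b)=e^{ib}-1=\sum_{j=1}^\infty \frac{i^j b^j}{j!}\in\mathfrak{A}$ (norm-convergent series in $\mathfrak{A}$). *)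

From HB Require Import structures.
From mathcomp Require Import all_boot all_order all_algebra.
From mathcomp Require Import all_classical all_reals all_analysis.
From mathcomp Require Import complex.

Set Implicit Arguments.
Unset Strict Implicit.
Unset Printing Implicit Defensive.
Import Order.TTheory GRing.Theory Num.Theory.
Local Open Scope ring_scope.
Local Open Scope classical_set_scope.

(* An (a priori
   non-unital) complex algebra is modelled as a complex vector space B
   (lmodType R[i]) together with an explicit multiplication [mul]. *)

Section Defs.
Variables (R : realType) (B : lmodType R[i]).

Definition assoc_bilinear (mul : B -> B -> B) : Prop :=
  [/\ (forall x y z, mul x (mul y z) = mul (mul x y) z),
      (forall x y z, mul (x + y) z = mul x z + mul y z),
      (forall x y z, mul x (y + z) = mul x y + mul x z),
      (forall (c : R[i]) x y, mul (c *: x) y = c *: mul x y) &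
      (forall (c : R[i]) x y, mul x (c *: y) = c *: mul x y)].

Definition is_involution (mul : B -> B -> B) (star : B -> B) : Prop :=
  [/\ (forall x y, star (x + y) = star x + star y),
      (forall (c : R[i]) x, star (c *: x) = conjc c *: star x),
      (forall x, star (star x) = x) &
      (forall x y, star (mul x y) = mul (star y) (star x))].

Definition is_norm_on (S : set B) (n : B -> R) : Prop :=
  [/\ (forall x, S x -> 0 <= n x),
      (forall x, S x -> n x = 0 -> x = 0),
      (forall x y, S x -> S y -> n (x + y) <= n x + n y) &
      (forall (c : R[i]) x, S x -> n (c *: x) = ComplexField.Normc.normc c * n x)].

Definition cvg_in (n : B -> R) (s : nat -> B) (x : B) : Prop :=
  forall e : R, 0 < e -> exists N : nat, forall m, (N <= m)%N -> n (s m - x) <= e.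

Definition cauchy_in (n : B -> R) (s : nat -> B) : Prop :=
  forall e : R, 0 < e -> exists N : nat,
    forall m m', (N <= m)%N -> (N <= m')%N -> n (s m - s m') <= e.

Definition complete_in (S : set B) (n : B -> R) : Prop :=
  forall s : nat -> B, (forall m, S (s m)) -> cauchy_in n s ->
    exists2 x, S x & cvg_in n s x.

Definition is_Cstar_algebra (mul : B -> B -> B) (star : B -> B) (nB : B -> R)
  : Prop :=
  [/\ assoc_bilinear mul, is_involution mul star,
      is_norm_on setT nB,
      (forall x y, nB (mul x y) <= nB x * nB y) &
      complete_in setT nB /\
      (forall x, nB (mul (star x) x) = nB x ^+ 2)].

(* n-th power a^n (meaningful for n >= 1): a^1 = a, a^(n+1) = a * a^n *)
Definition npow (mul : B -> B -> B) (a : B) (n : nat) : B :=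
  iter n.-1 (mul a) a.

Definition is_Banach_star_subalgebra (mul : B -> B -> B) (star : B -> B)
  (A : set B) (nA : B -> R) : Prop :=
  [/\ A 0,
      (forall x y, A x -> A y -> A (x + y)),
      (forall (c : R[i]) x, A x -> A (c *: x)),
      (forall x y, A x -> A y -> A (mul x y)) &
      (forall x, A x -> A (star x))] /\
  [/\ is_norm_on A nA,
      (forall x y, A x -> A y -> nA (mul x y) <= nA x * nA y),
      complete_in A nA &
      (forall x, A x -> forall e : R, 0 < e -> exists2 d : R, 0 < d &
         forall y, A y -> nA (y - x) < d -> nA (star y - star x) < e)].

Definition is_kpq_differential_subalgebra (mul : B -> B -> B) (star : B -> B)
  (nB : B -> R) (A : set B) (nA : B -> R) (k : nat) (p q : R) : Prop :=
  [/\ is_Banach_star_subalgebra mul star A nA,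
      (2 <= k)%N, 0 < p, 0 < q & p + q = k%:R] /\
      (exists2 C : R, 0 < C &
        forall a, A a -> nA (npow mul a k) <= C * (nA a `^ p) * (nB a `^ q)).

Definition u_partial (mul : B -> B -> B) (b : B) (n : nat) : B :=
  \sum_(0 <= j < n) ((('i%C : R[i]) ^+ j.+1) / (j.+1)`!%:R) *: npow mul b j.+1.

(* u(b) = e^{ib} - 1 = sum_{j>=1} i^j b^j / j!, the limit in (A, nA) of the
   partial sums (0 if no such limit exists, which does not happen for b in A). *)
Definition u (mul : B -> B -> B) (A : set B) (nA : B -> R) (b : B) : B :=
  xget 0 [set x | A x /\ cvg_in nA (u_partial mul b) x].

End Defs.

From HB Require Import structures.
From mathcomp Require Import all_boot all_order all_algebra.
From mathcomp Require Import all_classical all_reals all_analysis.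
From mathcomp Require Import complex.
From mathcomp Require Import ring lra.
Import Order.TTheory GRing.Theory Num.Theory.

(* For real t let v_t = u(t a) = e^(i t a) - 1.  The exponential series of a
   converges in the Banach algebra A, so |v_t|_A <= e^(|t| |a|_A), and the
   Cauchy product gives v_(s+t) = v_s + v_t + v_s v_t.  Since a is self-adjoint,
   v_t^* = v_(-t), hence v_t^* + v_t + v_t^* v_t = v_0 = 0: 1 + v_t is an
   isometry, and the C*-identity gives |v_t|_B <= 2.  Expanding
   v_(kt) = (1 + v_t)^k - 1 = v_t^k + (lower powers) and applying the
   (k,p,q)-inequality to v_t^k yields g(kt) <= D g(t)^r for
   g(t) = max(1, |v_t|_A) and r = max(k-1, p).  Iterating from |t| <= k^n gives
   ln g(t) <= (|a|_A + n ln D) r^n with n ~ log_k |t|, that is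
   ln g(t) = O(|t|^(log_k r) ln |t|) = o(|t|^tau). *)

Set Implicit Arguments.
Unset Strict Implicit.
Unset Printing Implicit Defensive.
Local Open Scope ring_scope.
Local Open Scope classical_set_scope.

Notation normc := (@ComplexField.Normc.normc _).

Definition expc (F : fieldType) (z : F) (j : nat) : F :=
  if j is 0 then 0 else z ^+ j / j`!%:R.

Lemma expc0 (F : fieldType) (z : F) : expc z 0 = 0. Proof. by []. Qed.

Lemma expc0z (F : fieldType) j : expc (0 : F) j = 0.
Proof. by case: j => //= j; rewrite expr0n /= mul0r. Qed.

Lemma exp_binomial (F : numFieldType) (z w : F) m :
  \sum_(0 <= j < m.+1) z ^+ j / j`!%:R * (w ^+ (m - j) / (m - j)`!%:R)
  = (z + w) ^+ m / m`!%:R.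
Proof.
rewrite addrC exprDn big_mkord mulr_suml; apply: eq_bigr => i _.
have him : (i <= m)%N by rewrite -ltnS.
have fact_neq0 n : (n`!%:R : F) != 0 by rewrite pnatr_eq0 -lt0n fact_gt0.
have := bin_fact him => /(congr1 (fun n => n%:R : F)); rewrite !natrM => hb.
rewrite -mulr_natr -hb; field.
by rewrite !fact_neq0 pnatr_eq0 -lt0n bin_gt0 him.
Qed.

Lemma expc_convolution (F : numFieldType) (z w : F) m :
  \sum_(0 <= j < m.+1) expc z j * expc w (m - j)
  = expc (z + w) m - expc z m - expc w m.
Proof.
case: m => [|m]; first by rewrite big_nat1 /= mul0r !subr0.
rewrite big_nat_recl // big_nat_recr //= mul0r add0r subnn mulr0 addr0.
rewrite -exp_binomial big_nat_recl // big_nat_recr //= subnn subn0.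
rewrite !expr0 !fact0 !divr1 mul1r mulr1.
under [in RHS]eq_big_nat => i /andP[_ im].
  rewrite subSS -[(m - i)%N]prednK ?subn_gt0 //.
  over.
under [in LHS]eq_big_nat => i /andP[_ im].
  rewrite subSS -[(m - i)%N]prednK ?subn_gt0 //=.
  over.
rewrite /=; set S := \sum_(_ <= _ < _) _; ring.
Qed.

Lemma sum_square_antidiag (V : nmodType) (f : nat -> nat -> V) K :
  \sum_(0 <= j < K) \sum_(0 <= l < K) f j l
  = \sum_(0 <= m < K) \sum_(0 <= j < m.+1) f j (m - j)%N
    + \sum_(0 <= j < K) \sum_(K - j <= l < K) f j l.
Proof.
have -> : \sum_(0 <= m < K) \sum_(0 <= j < m.+1) f j (m - j)%N
          = \sum_(0 <= j < K) \sum_(0 <= l < K - j) f j l.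
  elim: K => [|K IH]; first by rewrite !big_geq.
  rewrite big_nat_recr // IH.
  have -> : \sum_(0 <= j < K.+1) \sum_(0 <= l < K.+1 - j) f j l
      = \sum_(0 <= j < K.+1) (\sum_(0 <= l < K - j) f j l + f j (K - j)%N).
    by apply: eq_big_nat => j /andP[_ hj]; rewrite subSn // big_nat_recr.
  by rewrite big_split /= [in RHS]big_nat_recr //= subnn [X in _ + X + _]big_geq ?addr0.
rewrite -big_split /=; apply: eq_big_nat => j _.
by rewrite -big_cat_nat // leq_subr.
Qed.

Definition expc_sum (R : realType) (K : nat) (x : R) := \sum_(0 <= j < K) expc x j.

Lemma expc_sum_series (R : realType) (x : R) K :
  expc_sum K.+1 x = series (exp_coeff x) K.+1 - 1.
Proof.
have coefE n : exp_coeff x n = x ^+ n / n`!%:R by [].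
rewrite /expc_sum /series /= !big_nat_recl // coefE expr0 fact0 divr1 add0r.
by rewrite addrC addKr; apply: eq_big_nat => j _; rewrite coefE.
Qed.

Lemma expc_sum_cvg (R : realType) (x : R) : expc_sum n x @[n --> \oo] --> expR x - 1.
Proof.
rewrite -cvg_shiftS /=.
under eq_fun do rewrite expc_sum_series.
apply: cvgB; last exact: cvg_cst.
by rewrite cvg_shiftS; exact: is_cvg_series_exp_coeff.
Qed.

Lemma expc_sum_le (R : realType) (x : R) K : 0 <= x -> expc_sum K x <= expR x - 1.
Proof.
move=> x0; case: K => [|K].
  by rewrite /expc_sum big_geq // subr_ge0 (le_trans _ (expR_ge1Dx x)) ?lerDl.
rewrite expc_sum_series lerB //; apply: nondecreasing_cvgn_le.
- move=> n m nm; rewrite /series /= (big_cat_nat (leq0n n) nm) /= lerDl.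
  by apply: sumr_ge0 => j _; apply: exp_coeff_ge0.
- exact: is_cvg_series_exp_coeff.
Qed.

Definition expc_tail (R : realType) (x y : R) K :=
  \sum_(0 <= j < K) \sum_(K - j <= l < K) expc x j * expc y l.

Lemma expc_tailE (R : realType) (x y : R) K : expc_tail x y K =
  expc_sum K x * expc_sum K y - (expc_sum K (x + y) - expc_sum K x - expc_sum K y).
Proof.
apply/eqP; rewrite eq_sym subr_eq; apply/eqP.
rewrite /expc_sum mulr_suml; under eq_bigr do rewrite mulr_sumr.
rewrite sum_square_antidiag addrC /expc_tail; congr (_ + _).
by rewrite -!sumrB; apply: eq_bigr => m _; rewrite expc_convolution.
Qed.

Lemma expc_tail_cvg0 (R : realType) (x y : R) : expc_tail x y K @[K --> \oo] --> 0.
Proof.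
under eq_fun do rewrite expc_tailE.
have -> : 0 = (expR x - 1) * (expR y - 1)
             - ((expR (x + y) - 1) - (expR x - 1) - (expR y - 1)) :> R.
  by rewrite expRD; ring.
by apply: cvgB; [apply: cvgM | apply: cvgB; first apply: cvgB]; apply: expc_sum_cvg.
Qed.

Lemma normc_ge0 (R : rcfType) (z : R[i]) : 0 <= normc z.
Proof. by case: z => x y; apply: sqrtr_ge0. Qed.

Lemma normc_expc (R : realType) (z : R[i]) j : normc (expc z j) = expc (normc z) j.
Proof.
case: j => [|j]; first exact: ComplexField.Normc.normc0.
have normcX n : normc (z ^+ n) = normc z ^+ n.
  elim: n => [|n IH]; first by rewrite !expr0 ComplexField.Normc.normc1.
  by rewrite !exprS ComplexField.Normc.normcM IH.
rewrite /= ComplexField.Normc.normcM ComplexField.Normc.normcV normcX.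
by rewrite normcMn ComplexField.Normc.normc1.
Qed.

Lemma normc_iR (R : rcfType) (t : R) : normc ('i * t%:C)%C = `|t|.
Proof.
by rewrite ComplexField.Normc.normcM /= !expr0n /= !addr0 add0r expr1n sqrtr1 mul1r sqrtr_sqr.
Qed.

Lemma conjc_expc (R : realType) (z : R[i]) j : conjc (expc z j) = expc (conjc z) j.
Proof.
by case: j => [|j]; [exact: conjc0 | rewrite /= rmorphM rmorphXn fmorphV rmorph_nat].
Qed.

Section BilinearProduct.
Variables (R : realType) (B : lmodType R[i]) (mul : B -> B -> B).
Hypothesis mul_ab : assoc_bilinear mul.

Lemma bmulA x y z : mul x (mul y z) = mul (mul x y) z. Proof. by case: mul_ab. Qed.
Lemma bmulDl x y z : mul (x + y) z = mul x z + mul y z. Proof. by case: mul_ab. Qed.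
Lemma bmulDr x y z : mul x (y + z) = mul x y + mul x z. Proof. by case: mul_ab. Qed.
Lemma bmulZl c x y : mul (c *: x) y = c *: mul x y. Proof. by case: mul_ab. Qed.
Lemma bmulZr c x y : mul x (c *: y) = c *: mul x y. Proof. by case: mul_ab. Qed.

Lemma bmul0l y : mul 0 y = 0.
Proof. by apply: (addrI (mul 0 y)); rewrite -bmulDl !addr0. Qed.
Lemma bmul0r y : mul y 0 = 0.
Proof. by apply: (addrI (mul y 0)); rewrite -bmulDr !addr0. Qed.
Lemma bmulBl x y z : mul (x - y) z = mul x z - mul y z.
Proof. by apply: (addIr (mul y z)); rewrite -bmulDl !subrK. Qed.
Lemma bmulBr x y z : mul x (y - z) = mul x y - mul x z.
Proof. by apply: (addIr (mul x z)); rewrite -bmulDr !subrK. Qed.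

Lemma bmul_suml (I : Type) (r : seq I) (P : pred I) (F : I -> B) y :
  mul (\sum_(i <- r | P i) F i) y = \sum_(i <- r | P i) mul (F i) y.
Proof. exact: (big_morph (mul^~ y) (fun x z => bmulDl x z y) (bmul0l y)). Qed.
Lemma bmul_sumr (I : Type) (r : seq I) (P : pred I) (F : I -> B) y :
  mul y (\sum_(i <- r | P i) F i) = \sum_(i <- r | P i) mul y (F i).
Proof. exact: (big_morph (mul y) (bmulDr y) (bmul0r y)). Qed.

Lemma npowS a n : npow mul a n.+2 = mul a (npow mul a n.+1). Proof. by []. Qed.

Lemma npowD a n m : (0 < n)%N -> (0 < m)%N ->
  mul (npow mul a n) (npow mul a m) = npow mul a (n + m).
Proof.
case: n => // n; case: m => // m _ _; rewrite addSn addnS.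
by elim: n => [|n IH] //; rewrite npowS -bmulA IH.
Qed.

Lemma npowZ c a n : npow mul (c *: a) n.+1 = c ^+ n.+1 *: npow mul a n.+1.
Proof.
elim: n => [|n IH]; first by rewrite expr1.
by rewrite npowS IH bmulZl bmulZr scalerA -exprS.
Qed.

Variable star : B -> B.
Hypothesis star_inv : is_involution mul star.

Lemma starD x y : star (x + y) = star x + star y. Proof. by case: star_inv. Qed.
Lemma starZ c x : star (c *: x) = conjc c *: star x. Proof. by case: star_inv. Qed.
Lemma starK x : star (star x) = x. Proof. by case: star_inv. Qed.
Lemma starM x y : star (mul x y) = mul (star y) (star x). Proof. by case: star_inv. Qed.

Lemma star0 : star 0 = 0.
Proof. by apply: (addrI (star 0)); rewrite -starD !addr0. Qed.

Lemma star_sum (I : Type) (r : seq I) (P : pred I) (F : I -> B) :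
  star (\sum_(i <- r | P i) F i) = \sum_(i <- r | P i) star (F i).
Proof. exact: (big_morph star starD star0). Qed.

Lemma star_npow a n : star a = a -> star (npow mul a n) = npow mul a n.
Proof.
move=> sa; case: n => // n; elim: n => [|n IH] //.
by rewrite npowS starM IH sa -[X in mul _ X]/(npow mul a 1) npowD // addn1.
Qed.

End BilinearProduct.

Section CstarNorm.
Variables (R : realType) (B : lmodType R[i]) (mul : B -> B -> B) (star : B -> B).
Variable nB : B -> R.
Hypotheses (star_inv : is_involution mul star) (nB_norm : is_norm_on setT nB).
Hypotheses (nB_subm : forall x y, nB (mul x y) <= nB x * nB y)
  (nB_Cstar : forall x, nB (mul (star x) x) = nB x ^+ 2).

Lemma nB_ge0 x : 0 <= nB x. Proof. by case: nB_norm => h _ _ _; apply: h. Qed.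

Lemma nB_star_ge x : nB x <= nB (star x).
Proof.
have := nB_subm (star x) x; rewrite nB_Cstar expr2.
have [x0|] := ltrP 0 (nB x); first by rewrite ler_pM2r.
by move=> x_le0 _; apply: le_trans x_le0 (nB_ge0 _).
Qed.

Lemma nB_star x : nB (star x) = nB x.
Proof.
by apply/eqP; rewrite eq_le nB_star_ge -[X in _ <= nB X](starK star_inv) nB_star_ge.
Qed.

(* The hypothesis says that [1 + v] is an isometry of the unitization. *)
Lemma nB_le2_of_isometry v : star v + v + mul (star v) v = 0 -> nB v <= 2.
Proof.
move=> iso; have := nB_Cstar v; rewrite (_ : mul _ _ = - (star v + v)).
  case: nB_norm => _ _ nBD nBZ; rewrite -scaleN1r nBZ // normcN.
  rewrite ComplexField.Normc.normc1 mul1r => nB2.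
  have := nBD (star v) v I I; rewrite nB_star nB2 => le2.
  have := nB_ge0 v; nra.
by apply/eqP; rewrite -addr_eq0 addrC iso.
Qed.

End CstarNorm.

Lemma powR_ln_dominated (R : realType) (s tau a b : R) : s < tau -> 0 <= a -> 0 <= b ->
  exists T, 1 <= T /\ forall x, T <= x -> (a + b * ln x) * x `^ s <= x `^ tau.
Proof.
move=> s_tau a0 b0; set e := (tau - s) / 2.
have e0 : 0 < e by rewrite divr_gt0 // subr_gt0.
set M := Num.max 1 (Num.max (2 * a) (2 * b / e)).
have [M1 Ma Mb] : [/\ 1 <= M, 2 * a <= M & 2 * b / e <= M].
  by rewrite !le_max !lexx !orbT.
exists (Num.max 1 (M `^ e^-1)); split=> [|x]; first by rewrite le_max lexx.
rewrite ge_max => /andP[x1 xM].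
have x0 : 0 < x by apply: lt_le_trans x1.
have My : M <= x `^ e.
  rewrite -[M](powRr1 (le_trans ler01 M1)) -(mulVf (lt0r_neq0 e0)) powRrM.
  by apply: ge0_ler_powR; rewrite ?nnegrE ?powR_ge0 // ltW.
have lnx : ln x <= x `^ e / e.
  by rewrite ler_pdivlMr // mulrC -ln_powR ltW // ln_sublinear // powR_gt0.
have -> : tau = s + e + e by rewrite /e; field.
rewrite !powRD ?(gt_eqF x0) ?implybT //.
rewrite -mulrA [X in _ <= X]mulrC; apply: ler_wpM2r; first exact: powR_ge0.
set y := x `^ e in My lnx *; have y1 : 1 <= y := le_trans M1 My.
have bln : b * ln x <= y * (b / e) by rewrite mulrCA ler_wpM2l // mulrC.
nra.
Qed.

Lemma cover_by_power (R : realType) (k : nat) (r x : R) : (2 <= k)%N -> 1 <= r -> 1 <= x ->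
  exists n, [/\ x <= k%:R ^+ n, r ^+ n <= r * x `^ (ln r / ln k%:R)
              & n%:R <= 1 + ln x / ln k%:R].
Proof.
move=> k2 r1 x1; set K : R := k%:R; set s := ln r / ln K.
have K1 : 1 < K by rewrite ltr1n.
have K0 : 0 < K := lt_trans ltr01 K1.
have lK : 0 < ln K := ln_gt0 K1.
have x0 : 0 < x by apply: lt_le_trans x1.
have Ks : K `^ s = r by rewrite /powR gt_eqF // divfK ?gt_eqF // lnK // posrE (lt_le_trans ltr01).
have [N xN] : exists N, x <= K ^+ N.
  exists (Num.bound x); rewrite /K -natrX; apply: ltW; apply: lt_le_trans (archi_boundP (ltW x0)) _.
  by rewrite ler_nat ltnW // ltn_expl.
have s0 : 0 <= s := divr_ge0 (ln_ge0 r1) (ltW lK).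
case: (ex_minnP (ex_intro (fun n => x <= K ^+ n) N xN)) => -[|m] xKn min_n.
  exists 0%N; split => //; last by rewrite addr_ge0 // divr_ge0 ?ln_ge0 // ltW.
  by rewrite expr0 mulr_ege1 // -(powRr0 x) ler_powR.
have Kmx : K ^+ m < x by rewrite ltNge; apply/negP => /min_n; rewrite ltnn.
exists m.+1; split => //.
  rewrite exprS ler_wpM2l ?(le_trans ler01) // -Ks -powR_mulrn ?powR_ge0 // -powRrM.
  rewrite mulrC powRrM powR_mulrn ?(ltW K0) //.
  by apply: ge0_ler_powR => //; rewrite ?nnegrE ?exprn_ge0 ?ltW.
rewrite -addn1 natrD addrC lerD2l ler_pdivlMr // mulr_natl -lnXn //.
by rewrite ltW // ltr_ln // posrE exprn_gt0.
Qed.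

Lemma scaling_growth_le_powR (R : realType) (h : R -> R) (k : nat) (r c al tau : R) :
  (2 <= k)%N -> 1 <= r -> 0 <= c -> 0 <= al -> ln r / ln k%:R < tau ->
  (forall t, h t <= al * `|t|) -> (forall t, h (k%:R * t) <= c + r * h t) ->
  exists T, forall t, T <= `|t| -> h t <= `|t| `^ tau.
Proof.
move=> k2 r1 c0 al0 tau_gt h_lin h_scale; set K : R := k%:R.
have K0 : 0 < K by rewrite ltr0n (leq_trans _ k2).
have lK : 0 < ln K by rewrite ln_gt0 // ltr1n.
have h_pow n t : `|t| <= K ^+ n -> h t <= (al + n%:R * c) * r ^+ n.
  elim: n t => [|n IH] t tKn.
    by rewrite mul0r addr0 expr0 mulr1 (le_trans (h_lin t)) // ler_piMr.
  have tK : `|t / K| <= K ^+ n by rewrite normrM normfV (gtr0_norm K0) ler_pdivrMr // -exprSr.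
  have := h_scale (t / K); rewrite mulrC divfK ?gt_eqF // => /le_trans; apply.
  have := ler_wpM2l (le_trans ler01 r1) (IH _ tK).
  have : 0 <= c * (r ^+ n.+1 - 1) by rewrite mulr_ge0 // subr_ge0 exprn_ege1.
  rewrite (exprS r n) (mulrSr 1 n); nra.
have [T [T1 HT]] := powR_ln_dominated tau_gt
  (mulr_ge0 (addr_ge0 al0 c0) (le_trans ler01 r1)) (divr_ge0 (mulr_ge0 c0 (le_trans ler01 r1)) (ltW lK)).
exists T => t Tt; have t1 : 1 <= `|t| := le_trans T1 Tt.
have [n [tKn rn n_le]] := cover_by_power k2 r1 t1.
apply: le_trans (h_pow n t tKn) (le_trans _ (HT _ Tt)).
have -> : ((al + c) * r + c * r / ln K * ln `|t|) * `|t| `^ (ln r / ln K)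
    = (al + (1 + ln `|t| / ln K) * c) * (r * `|t| `^ (ln r / ln K)) by ring.
apply: ler_pM => //; first by rewrite addr_ge0 // mulr_ge0.
- exact: exprn_ge0 (le_trans ler01 r1).
- by rewrite lerD2l ler_wpM2r.
Qed.

Section ExpSeries.
Variables (R : realType) (B : lmodType R[i]) (mul : B -> B -> B).
Variables (A : set B) (nA : B -> R).
Hypotheses (A0 : A 0) (AD : forall x y, A x -> A y -> A (x + y))
  (AZ : forall (c : R[i]) x, A x -> A (c *: x)) (nA_norm : is_norm_on A nA).

Lemma AN x : A x -> A (- x).
Proof. by move=> Ax; rewrite -scaleN1r; apply: AZ. Qed.

Lemma AB x y : A x -> A y -> A (x - y).
Proof. by move=> Ax Ay; apply/AD/AN. Qed.

Lemma A_sum (I : Type) (r : seq I) (P : pred I) (F : I -> B) :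
  (forall i, A (F i)) -> A (\sum_(i <- r | P i) F i).
Proof. by move=> AF; apply: big_ind. Qed.

Lemma nA_ge0 x : A x -> 0 <= nA x. Proof. by case: nA_norm => h _ _ _; apply: h. Qed.
Lemma nA_eq0 x : A x -> nA x = 0 -> x = 0. Proof. by case: nA_norm => _ h _ _; apply: h. Qed.
Lemma nAD x y : A x -> A y -> nA (x + y) <= nA x + nA y.
Proof. by case: nA_norm => _ _ h _; apply: h. Qed.
Lemma nAZ (c : R[i]) x : A x -> nA (c *: x) = normc c * nA x.
Proof. by case: nA_norm => _ _ _ h; apply: h. Qed.

Lemma nA0 : nA 0 = 0.
Proof. by rewrite -(scale0r (0 : B)) nAZ // ComplexField.Normc.normc0 mul0r. Qed.

Lemma nAN x : A x -> nA (- x) = nA x.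
Proof. by move=> Ax; rewrite -scaleN1r nAZ // normcN ComplexField.Normc.normc1 mul1r. Qed.

Lemma nAB x y : A x -> A y -> nA (x - y) <= nA x + nA y.
Proof. by move=> Ax Ay; rewrite -(nAN Ay); apply/nAD/AN. Qed.

Lemma nA_distC x y : A x -> A y -> nA (x - y) = nA (y - x).
Proof. by move=> Ax Ay; rewrite -nAN ?opprB //; apply: AB. Qed.

Lemma nA_sum (I : Type) (r : seq I) (P : pred I) (F : I -> B) :
  (forall i, A (F i)) -> nA (\sum_(i <- r | P i) F i) <= \sum_(i <- r | P i) nA (F i).
Proof.
move=> AF; suff [] : A (\sum_(i <- r | P i) F i) /\
    nA (\sum_(i <- r | P i) F i) <= \sum_(i <- r | P i) nA (F i) by [].
apply: (big_ind2 (fun x y => A x /\ nA x <= y)) => //; first by rewrite nA0.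
move=> x1 x2 y1 y2 [Ax1 le1] [Ax2 le2]; split; first exact: AD.
exact: le_trans (nAD Ax1 Ax2) (lerD le1 le2).
Qed.

Lemma cvg_in_le (s : nat -> B) x (b : nat -> R) :
  (forall n, nA (s n - x) <= b n) -> b n @[n --> \oo] --> 0 -> cvg_in nA s x.
Proof.
move=> sb /cvgrPdist_le b0 e e0; have [N _ bN] := b0 e e0.
exists N => m Nm; apply: le_trans (sb m) _.
by apply: le_trans (bN m Nm); rewrite sub0r normrN ler_norm.
Qed.

Lemma cvg_in_dist0 (s : nat -> B) x :
  (forall n, A (s n)) -> A x -> cvg_in nA s x -> nA (s n - x) @[n --> \oo] --> 0.
Proof.
move=> As Ax sx; apply/cvgrPdist_le => e e0; have [N sN] := sx e e0.
by exists N => // n Nn; rewrite sub0r normrN ger0_norm ?sN //; apply/nA_ge0/AB.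
Qed.

Lemma cvg_in_unique (s : nat -> B) x y : (forall n, A (s n)) -> A x -> A y ->
  cvg_in nA s x -> cvg_in nA s y -> x = y.
Proof.
move=> As Ax Ay sx sy; apply/eqP; rewrite -subr_eq0; apply/eqP/nA_eq0; first exact: AB.
apply/eqP; rewrite eq_le nA_ge0 ?andbT; last exact: AB.
apply/ler_addgt0Pr => e e0.
have e20 : 0 < e / 2 by rewrite divr_gt0.
have [N1 h1] := sx _ e20; have [N2 h2] := sy _ e20; set n := maxn N1 N2.
have -> : x - y = (s n - y) - (s n - x) by rewrite opprB [RHS]addrC addrA subrK.
rewrite add0r (splitr e); apply: le_trans (nAB (AB (As n) Ay) (AB (As n) Ax)) _.
exact: lerD (h2 _ (leq_maxr _ _)) (h1 _ (leq_maxl _ _)).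
Qed.

Lemma cvg_inB (s t : nat -> B) x y : (forall n, A (s n)) -> (forall n, A (t n)) ->
  A x -> A y -> cvg_in nA s x -> cvg_in nA t y -> cvg_in nA (fun n => s n - t n) (x - y).
Proof.
move=> As At Ax Ay sx ty.
apply: (@cvg_in_le _ _ (fun n => nA (s n - x) + nA (t n - y))) => [n|].
  have -> : s n - t n - (x - y) = (s n - x) - (t n - y).
    by rewrite !opprD !opprK addrACA.
  by apply: nAB; apply: AB.
by rewrite -[0](addr0 0); apply: cvgD; apply: cvg_in_dist0.
Qed.

Lemma cvg_in_shiftS (s : nat -> B) x : cvg_in nA s x -> cvg_in nA (fun n => s n.+1) x.
Proof. by move=> sx e e0; have [N sN] := sx e e0; exists N => m Nm; apply/sN/leqW. Qed.

Hypotheses (mul_ab : assoc_bilinear mul) (AM : forall x y, A x -> A y -> A (mul x y)).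
Hypotheses (nA_subm : forall x y, A x -> A y -> nA (mul x y) <= nA x * nA y)
  (A_complete : complete_in A nA).

Lemma A_npow x n : A x -> A (npow mul x n).
Proof. by move=> Ax; case: n => // n; elim: n => // n IH; apply: AM. Qed.

Lemma nA_npow x n : A x -> nA (npow mul x n.+1) <= nA x ^+ n.+1.
Proof.
move=> Ax; elim: n => [|n IH]; first by rewrite expr1.
rewrite npowS exprS; apply: le_trans (nA_subm Ax (A_npow _ Ax)) _.
by apply: ler_wpM2l; [exact: nA_ge0 | exact: IH].
Qed.

Variable a : B.
Hypothesis Aa : A a.

Definition exp_partial (z : R[i]) K := \sum_(0 <= j < K) expc z j *: npow mul a j.

Definition expm1 (z : R[i]) := xget 0 [set x | A x /\ cvg_in nA (exp_partial z) x].

Lemma A_exp_partial z K : A (exp_partial z K).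
Proof. by apply: A_sum => j; apply/AZ/A_npow. Qed.

Lemma nA_exp_term z j :
  normc (expc z j) * nA (npow mul a j) <= expc (normc z * nA a) j.
Proof.
rewrite normc_expc; case: j => [|j]; first by rewrite mul0r.
rewrite /= exprMn mulrAC; apply: ler_wpM2r; first by rewrite invr_ge0.
by apply: ler_wpM2l; [exact/exprn_ge0/normc_ge0 | exact: nA_npow].
Qed.

Lemma nA_exp_partialB z K K' : (K <= K')%N ->
  nA (exp_partial z K' - exp_partial z K)
  <= expc_sum K' (normc z * nA a) - expc_sum K (normc z * nA a).
Proof.
move=> KK'; rewrite /exp_partial /expc_sum !(big_cat_nat (leq0n K) KK') /=.
rewrite ![\sum_(0 <= j < K) _ + _]addrC !addrK.
apply: le_trans (nA_sum _ _ _) (ler_sum _ _) => [j|j _]; first exact/AZ/A_npow.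
by rewrite nAZ; [exact: nA_exp_term | exact: A_npow].
Qed.

Lemma nA_exp_partial z K : nA (exp_partial z K) <= expR (normc z * nA a) - 1.
Proof.
have := nA_exp_partialB z (leq0n K).
rewrite [exp_partial z 0]big_geq // [expc_sum 0 _]big_geq // !subr0.
by move/le_trans; apply; rewrite expc_sum_le // mulr_ge0 ?normc_ge0 ?nA_ge0.
Qed.

Lemma exp_partial_cauchy z : cauchy_in nA (exp_partial z).
Proof.
move=> e e0; have := @expc_sum_cvg _ (normc z * nA a).
move=> /cvgrPdist_le /(_ (e / 2)) [|N _ sumN]; first by rewrite divr_gt0.
have near_lim n n' : (N <= n)%N -> (N <= n')%N -> (n <= n')%N ->
    nA (exp_partial z n' - exp_partial z n) <= e.
  move=> Nn Nn' nn'; apply: le_trans (nA_exp_partialB z nn') _.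
  move: (sumN n Nn) (sumN n' Nn'); rewrite !ler_norml => /andP[? ?] /andP[? ?].
  lra.
exists N => m m' Nm Nm'; case: (leqP m m') => mm'.
  by rewrite (nA_distC (A_exp_partial z m) (A_exp_partial z m')) near_lim.
by rewrite near_lim // ltnW.
Qed.

Lemma expm1_spec z : A (expm1 z) /\ cvg_in nA (exp_partial z) (expm1 z).
Proof.
apply: (@xgetPex _ 0 [set x | A x /\ cvg_in nA (exp_partial z) x]).
have [x Ax zx] := A_complete (A_exp_partial z) (exp_partial_cauchy z).
by exists x.
Qed.

Lemma A_expm1 z : A (expm1 z). Proof. by case: (expm1_spec z). Qed.

Lemma expm1_cvg z : cvg_in nA (exp_partial z) (expm1 z).
Proof. by case: (expm1_spec z). Qed.

Lemma expm1_dist0 z : nA (exp_partial z K - expm1 z) @[K --> \oo] --> 0.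
Proof. exact/cvg_in_dist0/expm1_cvg/A_expm1/A_exp_partial. Qed.

Lemma expm1_unique z x : A x -> cvg_in nA (exp_partial z) x -> expm1 z = x.
Proof. by move=> Ax zx; apply: (cvg_in_unique (A_exp_partial z)) (A_expm1 z) Ax (expm1_cvg z) zx. Qed.

Lemma nA_expm1 z : nA (expm1 z) <= expR (normc z * nA a) - 1.
Proof.
apply/ler_addgt0Pr => e e0; have [N zN] := expm1_cvg z e0.
have [AS AU] := (A_exp_partial z N, A_expm1 z).
have := nAD AS (AB AU AS); rewrite addrC subrK (nA_distC AU AS) => /le_trans; apply.
exact: lerD (nA_exp_partial z N) (zN N (leqnn N)).
Qed.

Lemma expm1_0 : expm1 0 = 0.
Proof.
apply: expm1_unique => // e e0; exists 0%N => m _.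
rewrite /exp_partial big1 => [|j _]; last by rewrite expc0z scale0r.
by rewrite subrr nA0 ltW.
Qed.

Lemma exp_partial_mul_cvg z w : cvg_in nA
  (fun K => mul (exp_partial z K) (exp_partial w K)) (mul (expm1 z) (expm1 w)).
Proof.
set ew := expR (normc w * nA a).
apply: (@cvg_in_le _ _ (fun K => nA (exp_partial z K - expm1 z) * ew
                               + nA (expm1 z) * nA (exp_partial w K - expm1 w))).
  move=> K; have [ASz ASw] := (A_exp_partial z K, A_exp_partial w K).
  have [AUz AUw] := (A_expm1 z, A_expm1 w).
  have -> : mul (exp_partial z K) (exp_partial w K) - mul (expm1 z) (expm1 w)
      = mul (exp_partial z K - expm1 z) (exp_partial w K)
        + mul (expm1 z) (exp_partial w K - expm1 w).
    by rewrite (bmulBl mul_ab) (bmulBr mul_ab) addrA subrK.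
  apply: le_trans (nAD (AM (AB ASz AUz) ASw) (AM AUz (AB ASw AUw))) _.
  apply: lerD; last exact: nA_subm AUz (AB ASw AUw).
  apply: le_trans (nA_subm (AB ASz AUz) ASw) _; apply: ler_wpM2l; first exact: nA_ge0 (AB ASz AUz).
  by apply: le_trans (nA_exp_partial w K) _; rewrite lerBlDr lerDl.
rewrite -[0](addr0 0) -{1}(mul0r ew) -[X in _ + X](mulr0 (nA (expm1 z))).
by apply: cvgD; [apply: cvgMr_tmp | apply: cvgMl_tmp]; apply: expm1_dist0.
Qed.

Definition exp_tail z w K := \sum_(0 <= j < K) \sum_(K - j <= l < K)
  (expc z j * expc w l) *: mul (npow mul a j) (npow mul a l).

Lemma exp_partialD z w K :
  exp_partial (z + w) K - exp_partial z K - exp_partial w K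
  = mul (exp_partial z K) (exp_partial w K) - exp_tail z w K.
Proof.
have npow_antidiag m j : (j <= m)%N ->
    (expc z j * expc w (m - j)) *: mul (npow mul a j) (npow mul a (m - j))
    = (expc z j * expc w (m - j)) *: npow mul a m.
  case: j => [|j] jm; first by rewrite expc0 mul0r !scale0r.
  case mj: (m - j.+1)%N => [|l]; first by rewrite expc0 mulr0 !scale0r.
  by rewrite (npowD mul_ab) // -mj subnKC.
apply/eqP; rewrite eq_sym subr_eq; apply/eqP.
rewrite /exp_partial (bmul_suml mul_ab); under eq_bigr do rewrite (bmul_sumr mul_ab).
under eq_bigr do under eq_bigr do rewrite (bmulZl mul_ab) (bmulZr mul_ab) scalerA.
rewrite sum_square_antidiag /exp_tail; congr (_ + _).
rewrite -!sumrB; apply: eq_bigr => m _.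
rewrite -!scalerBl -expc_convolution scaler_suml.
by apply: eq_big_nat => j /andP[_ jm]; apply: npow_antidiag.
Qed.

Lemma nA_exp_tail z w K :
  nA (exp_tail z w K) <= expc_tail (normc z * nA a) (normc w * nA a) K.
Proof.
have A_term j l : A ((expc z j * expc w l) *: mul (npow mul a j) (npow mul a l)).
  by apply/AZ/AM; apply: A_npow.
apply: le_trans (nA_sum _ _ _) (ler_sum _ _) => [j|j _]; first exact: A_sum.
apply: le_trans (nA_sum _ _ _) (ler_sum _ _) => // l _.
have [Apj Apl] := (A_npow j Aa, A_npow l Aa).
rewrite nAZ; last exact: AM.
rewrite ComplexField.Normc.normcM.
apply: le_trans (ler_wpM2l _ (nA_subm Apj Apl)) _; first by rewrite mulr_ge0 ?normc_ge0.
by rewrite mulrACA; apply: ler_pM; rewrite ?mulr_ge0 ?normc_ge0 ?nA_ge0 ?nA_exp_term.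
Qed.

Lemma exp_tail_cvg0 z w : cvg_in nA (exp_tail z w) 0.
Proof.
apply: (@cvg_in_le _ _ (expc_tail (normc z * nA a) (normc w * nA a))).
  by move=> K; rewrite subr0 nA_exp_tail.
exact: expc_tail_cvg0.
Qed.

Lemma expm1D z w : expm1 (z + w) = expm1 z + expm1 w + mul (expm1 z) (expm1 w).
Proof.
have A_tail K : A (exp_tail z w K).
  by do 2![apply: A_sum => ?]; apply/AZ/AM; apply: A_npow.
have AS := A_exp_partial; have AU := A_expm1.
have ASS K : A (mul (exp_partial z K) (exp_partial w K)) by apply: AM.
suff -> : mul (expm1 z) (expm1 w) = expm1 (z + w) - expm1 z - expm1 w.
  by rewrite -[_ - _ - _]addrA -opprD [RHS]addrC subrK.
apply: (@cvg_in_unique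
  (fun K => exp_partial (z + w) K - exp_partial z K - exp_partial w K)).
- by move=> K; apply: AB; [apply: AB|]; apply: AS.
- exact: AM (AU z) (AU w).
- by apply: AB; [apply: AB|]; apply: AU.
- under eq_fun do rewrite exp_partialD; rewrite -[mul _ _]subr0.
  apply: cvg_inB => //; last exact: exp_tail_cvg0.
    exact: AM (AU z) (AU w).
  exact: exp_partial_mul_cvg.
- apply: cvg_inB => //; last exact: expm1_cvg.
  + by move=> K; apply: AB.
  + exact: AB.
  + by apply: cvg_inB => //; apply: expm1_cvg.
Qed.

(* [iter m f v = (1 + v)^(m+1) - 1] for [f x = v + x + v x]; all the terms but
   [v^(m+1)] of the binomial expansion are gathered in [w]. *)
Lemma iter_expm1_split v m : A v -> exists w, [/\ A w,
  iter m (fun x => v + x + mul v x) v = npow mul v m.+1 + w &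
  nA w <= 4 ^+ m.+1 * Num.max 1 (nA v) ^+ m].
Proof.
move=> Av; set g := Num.max 1 (nA v).
have [g1 vg] : 1 <= g /\ nA v <= g by rewrite !le_max !lexx orbT.
elim: m => [|m [w [Aw iter_w le_w]]].
  by exists 0; rewrite addr0 nA0 expr0 mulr1 expr1; split.
have AP := A_npow m.+1 Av.
exists (v + npow mul v m.+1 + w + mul v w); split.
- by apply: AD; [apply: AD; [apply: AD|]|apply: AM].
- by rewrite iterS iter_w (bmulDr mul_ab) npowS addrCA !addrA.
set X := g ^+ m; set F := (4 : R) ^+ m.+1.
have X1 : 1 <= X := exprn_ege1 _ g1.
have F1 : 1 <= F by rewrite exprn_ege1 // ler1n.
have gX : g <= g * X by rewrite ler_peMr ?(le_trans ler01).
have gXF : g * X <= F * (g * X) by rewrite ler_peMl ?mulr_ge0 ?(le_trans ler01).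
have XF : F * X <= F * (g * X) by rewrite ler_wpM2l ?ler_peMl ?(le_trans ler01).
have Pg : nA (npow mul v m.+1) <= g * X.
  apply: le_trans (nA_npow m Av) _; rewrite exprS ler_pM ?exprn_ge0 ?nA_ge0 //.
  by rewrite lerXn2r ?nnegrE ?nA_ge0 ?(le_trans ler01).
have vw : nA (mul v w) <= F * (g * X).
  apply: le_trans (nA_subm Av Aw) _; rewrite mulrCA.
  by apply: ler_pM; rewrite ?nA_ge0.
have := nAD (AD (AD Av AP) Aw) (AM Av Aw); have := nAD (AD Av AP) Aw.
have := nAD Av AP; rewrite (exprS 4) (exprS g) -/X -/F.
have wF : nA w <= F * X := le_w.
lra.
Qed.

Lemma expm1_mulrn z m :
  expm1 (z *+ m.+1) = iter m (fun x => expm1 z + x + mul (expm1 z) x) (expm1 z).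
Proof. by elim: m => // m IH; rewrite mulrS expm1D IH. Qed.

Variable star : B -> B.
Hypotheses (star_inv : is_involution mul star) (A_star : forall x, A x -> A (star x)).
Hypothesis star_cont : forall x, A x -> forall e : R, 0 < e -> exists2 d : R, 0 < d &
  forall y, A y -> nA (y - x) < d -> nA (star y - star x) < e.
Hypothesis a_sa : star a = a.

Lemma cvg_in_star (s : nat -> B) x : (forall n, A (s n)) -> A x ->
  cvg_in nA s x -> cvg_in nA (fun n => star (s n)) (star x).
Proof.
move=> As Ax sx e e0; have [d d0 star_d] := star_cont Ax e0.
have [N sN] := sx (d / 2) (divr_gt0 d0 (ltr0Sn _ 1)).
exists N => m Nm; apply/ltW/star_d => //.
by apply: le_lt_trans (sN m Nm) _; rewrite ltr_pdivrMr // ltr_pMr // ltr1n.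
Qed.

Lemma exp_partial_star z K : star (exp_partial z K) = exp_partial (conjc z) K.
Proof.
rewrite /exp_partial (star_sum star_inv); apply: eq_bigr => j _.
by rewrite (starZ star_inv) (star_npow mul_ab star_inv) // conjc_expc.
Qed.

Lemma expm1_star z : star (expm1 z) = expm1 (conjc z).
Proof.
apply/esym/expm1_unique; first exact/A_star/A_expm1.
have -> : exp_partial (conjc z) = fun K => star (exp_partial z K).
  by apply: funext => K; rewrite exp_partial_star.
by apply: cvg_in_star; [exact: A_exp_partial | exact: A_expm1 | exact: expm1_cvg].
Qed.

Variable nB : B -> R.
Hypotheses (nB_norm : is_norm_on setT nB)
  (nB_subm : forall x y, nB (mul x y) <= nB x * nB y)
  (nB_Cstar : forall x, nB (mul (star x) x) = nB x ^+ 2).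

Lemma nB_expm1_iR (t : R) : nB (expm1 ('i * t%:C)%C) <= 2.
Proof.
apply: (nB_le2_of_isometry star_inv nB_norm nB_subm nB_Cstar); rewrite expm1_star.
have -> : conjc ('i * t%:C)%C = - ('i * t%:C)%C.
  by apply/eqP; rewrite eq_complex /= !mul0r mul1r subrr oppr0 !eqxx.
by rewrite -expm1D addNr expm1_0.
Qed.

Lemma u_expm1 (t : R) : u mul A nA ((t%:C)%C *: a) = expm1 ('i * t%:C)%C.
Proof.
set z := ('i * t%:C)%C; set ut := u_partial mul ((t%:C)%C *: a).
have utE n : ut n = exp_partial z n.+1.
  rewrite /ut /u_partial /exp_partial big_nat_recl // expc0 scale0r add0r.
  apply: eq_big_nat => j _; rewrite (npowZ mul_ab) scalerA /z /= exprMn.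
  by rewrite mulrAC.
have A_ut n : A (ut n) by rewrite utE; apply: A_exp_partial.
have ut_cvg : cvg_in nA ut (expm1 z).
  by rewrite (funext utE); apply/cvg_in_shiftS/expm1_cvg.
rewrite /u; case: (@xgetPex _ 0 [set x | A x /\ cvg_in nA ut x]).
  by exists (expm1 z); split => //; apply: A_expm1.
by move=> Ax ux; apply: (cvg_in_unique A_ut Ax (A_expm1 z)).
Qed.

Variables (k : nat) (p q C : R).
Hypotheses (k2 : (2 <= k)%N) (p0 : 0 < p) (q0 : 0 < q) (C0 : 0 < C).
Hypothesis nA_npow_k :
  forall x, A x -> nA (npow mul x k) <= C * (nA x `^ p) * (nB x `^ q).

Definition growth (t : R) := Num.max 1 (nA (expm1 ('i * t%:C)%C)).

Lemma growth_ge1 t : 1 <= growth t. Proof. by rewrite le_max lexx. Qed.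

Lemma ln_growth_le t : ln (growth t) <= nA a * `|t|.
Proof.
have := nA_expm1 ('i * t%:C)%C; rewrite normc_iR => le_exp.
rewrite -ler_expR lnK; last by rewrite posrE (lt_le_trans ltr01 (growth_ge1 t)).
rewrite ge_max; apply/andP; split.
  by rewrite -[1]expR0 ler_expR mulr_ge0 // nA_ge0.
by apply: le_trans le_exp _; rewrite mulrC lerBlDr lerDl.
Qed.

Lemma growth_scale t :
  growth (k%:R * t) <= (C * 2 `^ q + 4 ^+ k) * growth t `^ Num.max (k%:R - 1) p.
Proof.
set v := expm1 ('i * t%:C)%C; set g := growth t; set r := Num.max (k%:R - 1) p.
have [k' kE] : exists k', k = k'.+1 by exists k.-1; rewrite prednK // (leq_trans _ k2).
have Av : A v := A_expm1 _.
have g1 : 1 <= g := growth_ge1 t.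
have vg : nA v <= g by rewrite /g /growth le_max lexx orbT.
have pr : p <= r by rewrite le_max lexx orbT.
have kr : k'%:R <= r by rewrite le_max kE -natr1 addrK lexx.
have gr1 : 1 <= g `^ r by rewrite -(powRr0 g) ler_powR // (le_trans (ltW p0)).
have [w [Aw vkE le_w]] := iter_expm1_split k' Av.
have expm1E : expm1 ('i * (k%:R * t)%:C)%C = npow mul v k + w.
  by rewrite rmorphM rmorph_nat mulrCA mulr_natl kE expm1_mulrn vkE.
have pow_vk : nA (npow mul v k) <= C * 2 `^ q * g `^ r.
  apply: le_trans (nA_npow_k Av) _; rewrite mulrAC; apply: ler_pM.
  - by rewrite mulr_ge0 ?powR_ge0 ?ltW.
  - exact: powR_ge0.
  - apply: ler_wpM2l; first exact: ltW.
    apply: ge0_ler_powR; [exact: ltW | | by rewrite nnegrE | exact: nB_expm1_iR].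
    by rewrite nnegrE (nB_ge0 nB_norm).
  - apply: le_trans (ler_powR g1 pr); apply: ge0_ler_powR => //; first exact: ltW.
      by rewrite nnegrE nA_ge0.
    by rewrite nnegrE (le_trans ler01).
have rest_w : nA w <= 4 ^+ k * g `^ r.
  apply: le_trans le_w _; rewrite kE; apply: ler_wpM2l; first exact: exprn_ge0.
  by rewrite -powR_mulrn ?ler_powR // (le_trans ler01).
rewrite /growth expm1E ge_max; apply/andP; split.
  rewrite mulr_ege1 // ler_wpDl ?exprn_ege1 ?ler1n //.
  by rewrite mulr_ge0 ?powR_ge0 // ltW.
apply: le_trans (nAD (A_npow _ Av) Aw) _.
by rewrite mulrDl lerD.
Qed.

Lemma nA_u_growth tau : ln (Num.max (k%:R - 1) p) / ln k%:R < tau ->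
  exists T, forall t, T <= `|t| -> nA (u mul A nA ((t%:C)%C *: a)) <= expR (`|t| `^ tau).
Proof.
move=> tau_gt; set r := Num.max (k%:R - 1) p; set D := C * 2 `^ q + 4 ^+ k.
have r1 : 1 <= r by rewrite le_max lerBrDr (ler_nat _ 2) k2.
have D1 : 1 <= D.
  by apply: ler_wpDl; [rewrite mulr_ge0 ?powR_ge0 // ltW | rewrite exprn_ege1 ?ler1n].
have g0 t : 0 < growth t := lt_le_trans ltr01 (growth_ge1 t).
have ln_growth_scale t : ln (growth (k%:R * t)) <= ln D + r * ln (growth t).
  have gr0 : 0 < growth t `^ r by apply: powR_gt0.
  rewrite -ln_powR -lnM ?posrE ?(lt_le_trans ltr01 D1) // ler_ln ?posrE //.
    exact: growth_scale.
  by rewrite mulr_gt0 // (lt_le_trans ltr01 D1).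
have [T lnT] := scaling_growth_le_powR k2 r1 (ln_ge0 D1) (nA_ge0 Aa) tau_gt
  ln_growth_le ln_growth_scale.
exists T => t Tt; rewrite u_expm1; apply: le_trans (_ : _ <= growth t) _.
  by rewrite le_max lexx orbT.
by rewrite -[growth t]lnK ?posrE // ler_expR lnT.
Qed.

End ExpSeries.

Unset Implicit Arguments.

Theorem proposition3p5 (R : realType) (B : lmodType R[i])
  (mul : B -> B -> B) (star : B -> B) (nB : B -> R)
  (A : set B) (nA : B -> R) (k : nat) (p q : R) :
  is_Cstar_algebra mul star nB ->
  is_kpq_differential_subalgebra mul star nB A nA k p q ->
  forall a : B, A a -> star a = a ->
  forall tau : R, ln (Num.max (k%:R - 1) p) / ln (k%:R) < tau ->
  exists M T : R, 0 < M /\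
    forall t : R, T <= `|t| ->
      nA (u mul A nA ((t%:C)%C *: a)) <= M * expR (`|t| `^ tau).
Proof.
move=> [mul_ab star_inv nB_norm nB_subm [_ nB_Cstar]].
move=> [[[[A0 AD AZ AM A_star] [nA_norm nA_subm A_complete star_cont]] k2 p0 q0 _]].
move=> [C C0 nA_npow_k] a Aa a_sa tau tau_gt.
have [T growthT] := nA_u_growth A0 AD AZ nA_norm mul_ab AM nA_subm A_complete Aa
  star_inv A_star star_cont a_sa nB_norm nB_subm nB_Cstar k2 p0 q0 C0 nA_npow_k tau_gt.
by exists 1, T; split=> // t Tt; rewrite mul1r growthT.
Qed.
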